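(* Let $M\ge1$ and $b\ge1$ be integers and let $\tilde P_{\max}>0$, $\rho_a,\rho_q>0$, $\sigma_a^2,\sigma_q^2>0$. For nonnegative integers $n_a,n_q$ define $$\mathrm{MSE}(n_a,n_q)=M-M\Big(\frac{\rho_a n_a}{\rho_a n_a+\sigma_a^2}+\frac{2\rho_q n_q\sigma_a^4}{\pi(\rho_q+\sigma_q^2)(\alpha+\beta(n_a)\rho_q n_q)(\rho_a n_a+\sigma_a^2)^2}\Big),$$ where $\alpha=\frac{2}{\pi}\arccos\!\big(\frac{\rho_q}{\rho_q+\sigma_q^2}\big)$ and $\beta(n_a)=\frac{2}{\pi}\arcsin\!\big(\frac{\rho_q}{\rho_q+\sigma_q^2}\big)\frac{1}{\rho_q}-\frac{2\rho_a n_a}{\pi(\rho_q+\sigma_q^2)(\rho_a n_a+\sigma_a^2)}$. Consider the problem $$\min_{n_a,n_q}\ \mathrm{MSE}(n_a,n_q)\quad\text{s.t.}\quad 2^bMn_a+2Mn_q\le\tilde P_{\max},\ \ n_a,n_q\in\mathbb Z_+ .$$ Then this problem can be solved by a one-dimensional search over $n_a\in\{0,1,\dots,\lfloor \tilde P_{\max}/(2^bM)\rfloor\}$, where for each such $n_a$ one takes $n_q=\big\lfloor(\tilde P_{\max}-2^bMn_a)/(2M)\big\rfloor$; that is, the minimum of $\mathrm{MSE}(n_a,\lfloor(\tilde P_{\max}-2^bMn_a)/(2M)\rfloor)$ over these values of $n_a$ is attained at an optimal solution of the problem.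
   Context: $\mathbb Z_+$ denotes the set of nonnegative integers; $\lfloor\cdot\rfloor$ is the floor function. The function $\mathrm{MSE}(n_a,n_q)$ is the mean-squared error of the LMMSE estimator in a mixed-resolution linear Gaussian orthonormal measurement model with $Mn_a$ analog and $Mn_q$ 1-bit quantized measurements, and the constraint models a total ADC power budget with $b$-bit high-resolution ADCs. *)

From Stdlib Require Import Reals Lra Lia.
Open Scope R_scope.

(* floor of a real, as an integer: Int_part x = up x - 1 = floor x *)
Definition floorZ (x : R) : Z := Int_part x.

Definition alpha_q (rq sq2 : R) : R := 2 / PI * acos (rq / (rq + sq2)).

Definition beta_q (ra rq sa2 sq2 : R) (na : nat) : R :=
  2 / PI * asin (rq / (rq + sq2)) * / rq
  - 2 * ra * INR na / (PI * (rq + sq2) * (ra * INR na + sa2)).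

Definition MSE (M : nat) (ra rq sa2 sq2 : R) (na nq : nat) : R :=
  INR M - INR M *
   (ra * INR na / (ra * INR na + sa2)
    + 2 * rq * INR nq * sa2 ^ 2 /
      (PI * (rq + sq2) * (alpha_q rq sq2 + beta_q ra rq sa2 sq2 na * rq * INR nq)
          * (ra * INR na + sa2) ^ 2)).

Definition feasible (M b : nat) (P : R) (na nq : nat) : Prop :=
  2 ^ b * INR M * INR na + 2 * INR M * INR nq <= P.

Definition na_max (M b : nat) (P : R) : Z := floorZ (P / (2 ^ b * INR M)).

Definition nq_of (M b : nat) (P : R) (na : nat) : nat :=
  Z.to_nat (floorZ ((P - 2 ^ b * INR M * INR na) / (2 * INR M))).

From Stdlib Require Import Reals Lra Lia.
Open Scope R_scope.

(* For fixed [n_a] the MSE is nonincreasing in [n_q]: its [n_q]-dependent part is a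
   positive multiple of [x / (alpha + beta(n_a) rho_q x)], increasing in [x] because
   [alpha] and [beta(n_a)] are positive (the latter since [asin r > r] on [(0,1)]).
   Hence for each [n_a] it is optimal to spend the whole remaining budget on [n_q],
   i.e. to take [n_q = nq_of n_a], and the feasible [n_a] are exactly [0 .. na_max]. *)

Lemma le_Int_part (k : Z) (x : R) : (k <= Int_part x)%Z <-> IZR k <= x.
Proof.
  destruct (base_Int_part x) as [Hle Hgt]; split; intros H.
  - apply IZR_le in H; lra.
  - assert (IZR (k - 1) < IZR (Int_part x)) as Hlt by (rewrite minus_IZR; lra).
    apply lt_IZR in Hlt; lia.
Qed.

Lemma le_Int_part_div (n : nat) (c x : R) :
  0 < c -> (Z.of_nat n <= Int_part (x / c))%Z <-> c * INR n <= x.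
Proof.
  intros Hc; rewrite le_Int_part, <- INR_IZR_INZ.
  split; intros H.
  - apply (Rmult_le_compat_l c) in H; [|lra].
    replace (c * (x / c)) with x in H by (field; lra); exact H.
  - apply (Rmult_le_reg_l c); [exact Hc|].
    replace (c * (x / c)) with x by (field; lra); exact H.
Qed.

Lemma le_to_nat_Int_part_div (n : nat) (c x : R) :
  0 < c -> 0 <= x -> (n <= Z.to_nat (Int_part (x / c)))%nat <-> c * INR n <= x.
Proof.
  intros Hc Hx; rewrite <- le_Int_part_div by exact Hc.
  assert (0 <= Int_part (x / c))%Z.
  { apply le_Int_part; apply Rmult_le_pos; [lra|left; apply Rinv_0_lt_compat; lra]. }
  lia.
Qed.

Lemma exists_argmin_le (f : nat -> R) (N : nat) :
  exists n0, (n0 <= N)%nat /\ forall n, (n <= N)%nat -> f n0 <= f n.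
Proof.
  induction N as [|N [n0 [Hn0 Hmin]]].
  - exists 0%nat; split; [lia|]; intros n Hn.
    replace n with 0%nat by lia; lra.
  - destruct (Rle_or_lt (f n0) (f (S N))) as [Hle|Hlt].
    + exists n0; split; [lia|]; intros n Hn.
      destruct (Nat.eq_dec n (S N)) as [->|]; [exact Hle|apply Hmin; lia].
    + exists (S N); split; [lia|]; intros n Hn.
      destruct (Nat.eq_dec n (S N)) as [->|]; [lra|].
      specialize (Hmin n ltac:(lia)); lra.
Qed.

Lemma div_affine_le (a c x y : R) :
  0 < a -> 0 < c -> 0 <= x <= y -> x / (a + c * x) <= y / (a + c * y).
Proof.
  intros Ha Hc Hxy.
  assert (0 < a + c * x) by nra.
  assert (0 < a + c * y) by nra.
  apply (Rmult_le_reg_r ((a + c * x) * (a + c * y))); [nra|].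
  replace (x / (a + c * x) * ((a + c * x) * (a + c * y))) with (x * (a + c * y))
    by (field; lra).
  replace (y / (a + c * y) * ((a + c * x) * (a + c * y))) with (y * (a + c * x))
    by (field; lra).
  nra.
Qed.

Lemma asin_gt_id (r : R) : 0 < r < 1 -> r < asin r.
Proof.
  intros Hr.
  destruct (asin_bound r) as [Hlo Hhi].
  destruct (Rle_or_lt (asin r) 0) as [Hle|Hpos].
  - assert (sin (asin r) <= sin 0) as Hsin.
    { pose proof PI_RGT_0; apply sin_incr_1; lra. }
    rewrite sin_asin, sin_0 in Hsin by lra; lra.
  - pose proof (sin_lt_x _ Hpos) as Hsin.
    rewrite sin_asin in Hsin by lra; exact Hsin.
Qed.

Lemma ratio_in_unit_interval (x y : R) : 0 < x -> 0 < y -> 0 < x / (x + y) < 1.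
Proof.
  intros Hx Hy; split.
  - apply Rdiv_lt_0_compat; lra.
  - apply (Rmult_lt_reg_r (x + y)); [lra|].
    replace (x / (x + y) * (x + y)) with x by (field; lra); lra.
Qed.

Lemma alpha_q_pos (rq sq2 : R) : 0 < rq -> 0 < sq2 -> 0 < alpha_q rq sq2.
Proof.
  intros Hrq Hsq; unfold alpha_q.
  pose proof (ratio_in_unit_interval rq sq2 Hrq Hsq).
  destruct (acos_bound_lt (rq / (rq + sq2))) as [Hacos _]; [lra|].
  pose proof PI_RGT_0.
  apply Rmult_lt_0_compat; [apply Rdiv_lt_0_compat|]; lra.
Qed.

Lemma beta_q_pos (ra rq sa2 sq2 : R) (na : nat) :
  0 < ra -> 0 < rq -> 0 < sa2 -> 0 < sq2 -> 0 < beta_q ra rq sa2 sq2 na.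
Proof.
  intros Hra Hrq Hsa Hsq; unfold beta_q.
  pose proof PI_RGT_0.
  set (s := rq + sq2); set (u := ra * INR na).
  assert (Hu : 0 <= u) by (apply Rmult_le_pos; [lra|apply pos_INR]).
  pose proof (asin_gt_id (rq / s) (ratio_in_unit_interval rq sq2 Hrq Hsq)) as Hasin.
  set (A := asin (rq / s)) in *.
  assert (Hasin' : / s < A / rq).
  { apply (Rmult_lt_reg_r rq); [exact Hrq|].
    replace (A / rq * rq) with A by (field; lra).
    replace (/ s * rq) with (rq / s) by (field; unfold s; lra); exact Hasin. }
  assert (Hsat : u / (s * (u + sa2)) <= / s).
  { apply (Rmult_le_reg_r (s * (u + sa2))); [unfold s; nra|].
    replace (u / (s * (u + sa2)) * (s * (u + sa2))) with u by (field; unfold s; lra).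
    replace (/ s * (s * (u + sa2))) with (u + sa2) by (field; unfold s; lra); lra. }
  replace (2 / PI * A * / rq - 2 * ra * INR na / (PI * s * (u + sa2)))
    with (2 / PI * (A / rq - u / (s * (u + sa2))))
    by (unfold u; field; fold u; unfold s; repeat split; lra).
  apply Rmult_lt_0_compat; [apply Rdiv_lt_0_compat|]; lra.
Qed.

Lemma MSE_antitone_nq (M : nat) (ra rq sa2 sq2 : R) (na n1 n2 : nat) :
  0 < ra -> 0 < rq -> 0 < sa2 -> 0 < sq2 -> (n1 <= n2)%nat ->
  MSE M ra rq sa2 sq2 na n2 <= MSE M ra rq sa2 sq2 na n1.
Proof.
  intros Hra Hrq Hsa Hsq Hn; unfold MSE.
  pose proof (alpha_q_pos rq sq2 Hrq Hsq) as Ha.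
  pose proof (beta_q_pos ra rq sa2 sq2 na Hra Hrq Hsa Hsq) as Hb.
  set (a := alpha_q rq sq2) in *; set (c := beta_q ra rq sa2 sq2 na * rq).
  assert (Hc : 0 < c) by (apply Rmult_lt_0_compat; lra).
  set (D := ra * INR na + sa2).
  assert (HD : 0 < D) by (unfold D; pose proof (pos_INR na); nra).
  set (K := 2 * rq * sa2 ^ 2 / (PI * (rq + sq2) * D ^ 2)).
  assert (HK : 0 < K).
  { pose proof PI_RGT_0; unfold K.
    apply Rdiv_lt_0_compat; apply Rmult_lt_0_compat;
      try apply pow_lt; try apply Rmult_lt_0_compat; lra. }
  assert (Hterm : forall x, 0 <= x ->
    2 * rq * x * sa2 ^ 2 / (PI * (rq + sq2) * (a + c * x) * D ^ 2)
    = K * (x / (a + c * x))).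
  { intros x Hx; unfold K; pose proof PI_RGT_0.
    assert (0 < a + c * x) by nra.
    field; repeat split; lra. }
  rewrite !Hterm by apply pos_INR.
  assert (Hn' : 0 <= INR n1 <= INR n2) by (split; [apply pos_INR|apply le_INR; exact Hn]).
  pose proof (div_affine_le a c (INR n1) (INR n2) Ha Hc Hn').
  pose proof (pos_INR M).
  apply Rplus_le_compat_l, Ropp_le_contravar, Rmult_le_compat_l; [lra|].
  apply Rplus_le_compat_l, Rmult_le_compat_l; lra.
Qed.

Lemma le_na_max_iff (M b : nat) (P : R) (na : nat) : (1 <= M)%nat ->
  (Z.of_nat na <= na_max M b P)%Z <-> 2 ^ b * INR M * INR na <= P.
Proof.
  intros HM; apply le_Int_part_div.
  apply Rmult_lt_0_compat; [apply pow_lt; lra|].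
  apply (lt_INR 0); exact HM.
Qed.

Lemma le_nq_of_iff (M b : nat) (P : R) (na nq : nat) : (1 <= M)%nat ->
  2 ^ b * INR M * INR na <= P ->
  (nq <= nq_of M b P na)%nat <-> feasible M b P na nq.
Proof.
  intros HM Hna; unfold nq_of, floorZ, feasible.
  assert (0 < INR M) by (apply (lt_INR 0); exact HM).
  rewrite le_to_nat_Int_part_div by lra.
  lra.
Qed.

Theorem proposition1 (M b : nat) (P ra rq sa2 sq2 : R)
  (hM : (1 <= M)%nat) (hb : (1 <= b)%nat) (hP : 0 < P)
  (hra : 0 < ra) (hrq : 0 < rq) (hsa : 0 < sa2) (hsq : 0 < sq2) :
  (* the one-dimensional search has a minimizer *)
  (exists na0 : nat, (Z.of_nat na0 <= na_max M b P)%Z /\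
     forall na : nat, (Z.of_nat na <= na_max M b P)%Z ->
       MSE M ra rq sa2 sq2 na0 (nq_of M b P na0)
         <= MSE M ra rq sa2 sq2 na (nq_of M b P na)) /\
  (* every minimizer of the search yields an optimal solution of the problem *)
  (forall na0 : nat, (Z.of_nat na0 <= na_max M b P)%Z ->
     (forall na : nat, (Z.of_nat na <= na_max M b P)%Z ->
       MSE M ra rq sa2 sq2 na0 (nq_of M b P na0)
         <= MSE M ra rq sa2 sq2 na (nq_of M b P na)) ->
     feasible M b P na0 (nq_of M b P na0) /\
     forall na nq : nat, feasible M b P na nq ->
       MSE M ra rq sa2 sq2 na0 (nq_of M b P na0) <= MSE M ra rq sa2 sq2 na nq).
Proof.
  assert (Hmax : (0 <= na_max M b P)%Z).
  { apply (le_na_max_iff M b P 0 hM); simpl; lra. }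
  split.
  - destruct (exists_argmin_le (fun na => MSE M ra rq sa2 sq2 na (nq_of M b P na))
        (Z.to_nat (na_max M b P))) as [na0 [Hna0 Hmin]].
    exists na0; split; [lia|].
    intros na Hna; apply Hmin; lia.
  - intros na0 Hna0 Hmin.
    apply (le_na_max_iff M b P na0 hM) in Hna0.
    split; [apply le_nq_of_iff; auto|].
    intros na nq Hfeas.
    assert (Hna : 2 ^ b * INR M * INR na <= P).
    { unfold feasible in Hfeas; pose proof (pos_INR M); pose proof (pos_INR nq); nra. }
    apply (le_nq_of_iff M b P na nq hM Hna) in Hfeas.
    apply (le_na_max_iff M b P na hM) in Hna.
    specialize (Hmin na Hna).
    pose proof (MSE_antitone_nq M ra rq sa2 sq2 na _ _ hra hrq hsa hsq Hfeas).
    lra.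
Qed.
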